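(* Let $\mathcal D$ be a $k$-oriented Spherical Diagram and $H$ an attractor hull of $\mathcal D$. If an arc of $\mathcal D$ intersects the interior of $H$, then it intersects the boundary of $H$ in at most one point.
   Context: A geodesic arc on the unit sphere in $\mathbb R^3$ is the unique shortest curve joining two non-antipodal points. An arc $a$ blocks an arc $b$ (equivalently, $b$ hits $a$) if an endpoint of $b$ lies in the relative interior of $a$. A Spherical Diagram (SD) is a finite non-empty collection $\mathcal D$ of pairwise interior-disjoint geodesic arcs on the unit sphere such that each arc of $\mathcal D$ is blocked by arcs of $\mathcal D$ at each of its endpoints. An SD $\mathcal D$ is $k$-oriented if there exist a set $P$ of $k$ points on the unit sphere (poles), no two antipodal, and a function $f\colon\mathcal D\to P$ such that each arc $a\in\mathcal D$ lies on a great circle through $f(a)$ but contains neither $f(a)$ nor its antipode $-f(a)$ (the anti-pole of $f(a)$). An attractor of a $k$-oriented SD is a set of $k$ points, no two antipodal, chosen among its poles and anti-poles. An attractor hull is the spherical convex hull of an attractor (the whole sphere if the attractor is not contained in any open hemisphere). ''Intersect'' means ''have non-empty intersection''. *)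

From HB Require Import structures.
From mathcomp Require Import all_boot all_order all_algebra.
From mathcomp Require Import reals.
Set Implicit Arguments. Unset Strict Implicit. Unset Printing Implicit Defensive.
Import Order.TTheory GRing.Theory Num.Theory.
Local Open Scope ring_scope.

Section SphereDefs.
Variable R : realType.

Definition pt := 'rV[R]_3.

Definition dot (u v : pt) : R := \sum_(i < 3) u 0 i * v 0 i.

Definition on_sphere (x : pt) : Prop := dot x x = 1.

Definition dist2 (x y : pt) : R := dot (x - y) (x - y).

(* A geodesic arc is given by its two endpoints, which are distinct,
   non-antipodal points of the sphere. *)
Definition arc_ok (p q : pt) : Prop :=
  [/\ on_sphere p, on_sphere q, p <> q & p <> - q].

Definition garc (p q : pt) (x : pt) : Prop :=
  on_sphere x /\ exists a b : R, [/\ 0 <= a, 0 <= b & x = a *: p + b *: q].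

Definition arc_relint (p q : pt) (x : pt) : Prop :=
  on_sphere x /\ exists a b : R, [/\ 0 < a, 0 < b & x = a *: p + b *: q].

Definition spherical_diagram (I : finType) (ends : I -> pt * pt) : Prop :=
  [/\ (0 < #|I|)%N,
      (forall i, arc_ok (ends i).1 (ends i).2),
      (forall i j, i <> j -> forall x,
          arc_relint (ends i).1 (ends i).2 x ->
          ~ arc_relint (ends j).1 (ends j).2 x) &
      (* each arc is blocked at each of its endpoints *)
      (forall i,
          (exists j, arc_relint (ends j).1 (ends j).2 (ends i).1) /\
          (exists j, arc_relint (ends j).1 (ends j).2 (ends i).2))].

(* The poles P (k points, distinct, no two antipodal) together with the
   assignment f witness that the diagram is k-oriented. *)
Definition orientation (I : finType) (ends : I -> pt * pt) (k : nat)
    (P : 'I_k -> pt) (f : I -> 'I_k) : Prop :=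
  [/\ (forall i, on_sphere (P i)),
      injective P,
      (forall i j, P i <> - P j) &
      (forall a : I,
        [/\ (* the arc lies on a great circle through the pole f a *)
            (exists n : pt, [/\ n != 0, dot n (P (f a)) = 0,
                                dot n (ends a).1 = 0 & dot n (ends a).2 = 0]),
            ~ garc (ends a).1 (ends a).2 (P (f a)) &
            ~ garc (ends a).1 (ends a).2 (- P (f a))])].

Definition attractor (k : nat) (P : 'I_k -> pt) (A : 'I_k -> pt) : Prop :=
  [/\ injective A,
      (forall j, exists i, A j = P i \/ A j = - P i) &
      (forall i j, A i <> - A j)].

Definition in_open_hemisphere (k : nat) (A : 'I_k -> pt) : Prop :=
  exists v : pt, on_sphere v /\ forall j, 0 < dot v (A j).

(* spherical convex hull of A: the points of the sphere lying in the convex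
   cone spanned by A, or the whole sphere if A is not contained in any open
   hemisphere *)
Definition attractor_hull (k : nat) (A : 'I_k -> pt) (x : pt) : Prop :=
  on_sphere x /\
  (in_open_hemisphere A ->
     exists lam : 'I_k -> R, (forall j, 0 <= lam j) /\
                             x = \sum_(j < k) lam j *: A j).

Definition sph_interior (H : pt -> Prop) (x : pt) : Prop :=
  on_sphere x /\ H x /\
  exists e : R, 0 < e /\ forall y, on_sphere y -> dist2 y x < e -> H y.

Definition sph_closure (H : pt -> Prop) (x : pt) : Prop :=
  on_sphere x /\ forall e : R, 0 < e -> exists y, H y /\ dist2 y x < e.

Definition sph_boundary (H : pt -> Prop) (x : pt) : Prop :=
  sph_closure H x /\ ~ sph_interior H x.

End SphereDefs.

From HB Require Import structures.
From mathcomp Require Import all_boot all_order all_algebra.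
From mathcomp Require Import reals.
From mathcomp Require Import ring lra.
From Stdlib Require Import Classical_Prop.
Set Implicit Arguments. Unset Strict Implicit. Unset Printing Implicit Defensive.
Import Order.TTheory GRing.Theory Num.Theory.
Local Open Scope ring_scope.

(* If the attractor lies in no open hemisphere, its hull is the whole sphere,
   which has no boundary.  Otherwise the hull H is the trace on the sphere of a
   convex cone, so for a in the closure and w in the interior of H, every point
   s a + t w (s >= 0, t > 0) of the sphere is interior to H.  The attractor
   contains c = +-(pole of the arc), a point of H on the great circle of the
   arc which, like -c, is not on the arc: c lies beyond one endpoint.  Fix an
   interior point z on the arc.  An arc point between c and z is interior, so
   boundary points lie beyond z, and of two distinct such points the one closer
   to z would be interior as well. *)

Section Cones.
Variables (R : numDomainType) (V : lmodType R).

Definition cone (k : nat) (A : 'I_k -> V) (x : V) :=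
  exists lam : 'I_k -> R, (forall j, 0 <= lam j) /\ x = \sum_(j < k) lam j *: A j.

Lemma coneD k (A : 'I_k -> V) x y : cone A x -> cone A y -> cone A (x + y).
Proof.
move=> [l [l0 ->]] [m [m0 ->]]; exists (fun j => l j + m j); split.
  by move=> j; rewrite addr_ge0.
by rewrite -big_split /=; apply: eq_bigr => j _; rewrite scalerDl.
Qed.

Lemma coneZ k (A : 'I_k -> V) r x : 0 <= r -> cone A x -> cone A (r *: x).
Proof.
move=> r0 [l [l0 ->]]; exists (fun j => r * l j); split.
  by move=> j; rewrite mulr_ge0.
by rewrite scaler_sumr; apply: eq_bigr => j _; rewrite scalerA.
Qed.

Lemma cone_gen k (A : 'I_k -> V) j : cone A (A j).
Proof.
exists (fun i => (i == j)%:R); split => [i|]; first exact: ler0n.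
by rewrite (bigD1 j) //= eqxx scale1r big1 ?addr0 // => i /negbTE ->; rewrite scale0r.
Qed.

Definition vbetween (x a w : V) := exists s t : R,
  [/\ 0 <= s, 0 < t & x = s *: a + t *: w].

Definition pcomb (p q : V) (u : R * R) : V := u.1 *: p + u.2 *: q.

End Cones.

Section PlanarCones.
Variable R : realFieldType.
Implicit Types u v w c x y z : R * R.

(* A pair u stands for the point pcomb p q u = u.1 *: p + u.2 *: q of the
   plane of an arc pq; the arc itself is the quadrant. *)
Definition det2 u v : R := u.1 * v.2 - u.2 * v.1.

Definition quadrant u := [/\ 0 <= u.1, 0 <= u.2 & 0 < u.1 + u.2].

Definition pbetween u v w := exists s t : R,
  [/\ 0 <= s, 0 < t, u.1 = s * v.1 + t * w.1 & u.2 = s * v.2 + t * w.2].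

Lemma pbetween_cramer u v w : det2 v w != 0 ->
  0 <= det2 u w * det2 v w -> 0 < det2 v u * det2 v w -> pbetween u v w.
Proof.
move=> D0 s0 t0; have D2 : 0 < det2 v w ^+ 2 by rewrite exprn_even_gt0.
exists (det2 u w * det2 v w / det2 v w ^+ 2), (det2 v u * det2 v w / det2 v w ^+ 2).
by split; rewrite ?divr_ge0 ?divr_gt0 ?(ltW D2) //; rewrite /det2 in D0 *; field.
Qed.

Lemma det2_quadrant_gt0 c u : 0 < c.1 -> c.2 < 0 -> quadrant u -> 0 < det2 c u.
Proof.
move=> c1 c2 [u1 u2 u12]; rewrite /det2.
have [u2p | u2n] := ltrP 0 u.2; first nra.
have -> : u.2 = 0 by apply/eqP; rewrite eq_le u2n u2.
nra.
Qed.

Lemma quadrant_sweep c x y z : 0 < c.1 -> c.2 < 0 ->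
  quadrant x -> quadrant y -> quadrant z ->
  [\/ pbetween x c z \/ pbetween x y z, pbetween y c z \/ pbetween y x z
    | det2 x y = 0].
Proof.
move=> c1 c2 qx qy qz; have cu := det2_quadrant_gt0 c1 c2.
have cx := cu _ qx; have cy := cu _ qy; have cz := cu _ qz.
have [xz | xz] := lerP 0 (det2 x z).
  by apply: Or31; left; apply: pbetween_cramer; rewrite ?gt_eqF //; nra.
have [yz | yz] := lerP 0 (det2 y z).
  by apply: Or32; left; apply: pbetween_cramer; rewrite ?gt_eqF //; nra.
have yx : det2 y x = - det2 x y by rewrite /det2; ring.
have [xy | xy | ->] := ltrgtP (det2 x y) 0; last exact: Or33.
- by apply: Or32; right; apply: pbetween_cramer; rewrite ?lt_eqF //; nra.
- by apply: Or31; right; apply: pbetween_cramer; rewrite ?lt_eqF ?yx //; nra.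
Qed.

Lemma det2_eq0_quadrant x y : quadrant x -> quadrant y -> det2 x y = 0 ->
  exists2 r, 0 <= r & y.1 = r * x.1 /\ y.2 = r * x.2.
Proof.
move=> [x1 x2 x12] [y1 y2 _] D.
have N0 : x.1 ^+ 2 + x.2 ^+ 2 != 0.
  by have h := mulr_gt0 x12 x12; rewrite gt_eqF //; nra.
exists ((x.1 * y.1 + x.2 * y.2) / (x.1 ^+ 2 + x.2 ^+ 2)).
  by rewrite divr_ge0 ?addr_ge0 ?mulr_ge0 ?sqr_ge0.
have e1 : y.1 * (x.1 ^+ 2 + x.2 ^+ 2) = (x.1 * y.1 + x.2 * y.2) * x.1.
  by apply/subr0_eq; transitivity (- x.2 * det2 x y); [rewrite /det2; ring | rewrite D mulr0].
have e2 : y.2 * (x.1 ^+ 2 + x.2 ^+ 2) = (x.1 * y.1 + x.2 * y.2) * x.2.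
  by apply/subr0_eq; transitivity (x.1 * det2 x y); [rewrite /det2; ring | rewrite D mulr0].
by split; apply: (mulIf N0); rewrite mulrAC divfK.
Qed.

Lemma pbetween_pcomb (V : lmodType R) (p q : V) u v w :
  pbetween u v w -> vbetween (pcomb p q u) (pcomb p q v) (pcomb p q w).
Proof.
move=> [s [t [s0 t0 e1 e2]]]; exists s, t; split => //.
by rewrite /pcomb e1 e2 !scalerDr !scalerDl !scalerA addrACA.
Qed.

End PlanarCones.

Section EuclideanSpace.
Variable R : realType.
Implicit Types (p q c n u v x : pt R) (r : R).

Lemma dot3 u v :
  dot u v = u 0 0 * v 0 0 + u 0 1 * v 0 1 + u 0 2 * v 0 2.
Proof.
rewrite /dot !big_ord_recr big_ord0 /= add0r.
by congr (_ * _ + _ * _ + _ * _); congr (_ _ _); apply: val_inj.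
Qed.

Lemma row3P u v : u 0 0 = v 0 0 -> u 0 1 = v 0 1 -> u 0 2 = v 0 2 -> u = v.
Proof.
by move=> e0 e1 e2; apply/rowP => -[[|[|[|//]]] i3]; [move: e0 | move: e1 | move: e2];
  congr (_ = _); congr (_ _ _); apply: val_inj.
Qed.

Lemma dotC u v : dot u v = dot v u.
Proof. by rewrite !dot3; ring. Qed.

Lemma dotNr u v : dot u (- v) = - dot u v.
Proof. by rewrite !dot3 !mxE; ring. Qed.

Lemma dotZl r u v : dot (r *: u) v = r * dot u v.
Proof. by rewrite !dot3 !mxE; ring. Qed.

Lemma dotZr r u v : dot u (r *: v) = r * dot u v.
Proof. by rewrite !dot3 !mxE; ring. Qed.

Lemma dot_ge0 u : 0 <= dot u u.
Proof. by rewrite dot3 -!expr2 !addr_ge0 ?sqr_ge0. Qed.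

Lemma dot_eq0 u : dot u u = 0 -> u = 0.
Proof. by rewrite dot3 => h; apply: row3P; rewrite mxE; nra. Qed.

Lemma dot_sqr_le u v : dot u v ^+ 2 <= dot u u * dot v v.
Proof.
pose lagrange := (u 0 0 * v 0 1 - u 0 1 * v 0 0) ^+ 2 +
  (u 0 1 * v 0 2 - u 0 2 * v 0 1) ^+ 2 + (u 0 0 * v 0 2 - u 0 2 * v 0 0) ^+ 2.
have -> : dot u u * dot v v = dot u v ^+ 2 + lagrange by rewrite /lagrange !dot3; ring.
by rewrite lerDl !addr_ge0 ?sqr_ge0.
Qed.

Definition cross u v : pt R := \row_(i < 3)
  [:: u 0 1 * v 0 2 - u 0 2 * v 0 1;
      u 0 2 * v 0 0 - u 0 0 * v 0 2;
      u 0 0 * v 0 1 - u 0 1 * v 0 0]`_i.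

Lemma cross_decomposition p q x :
  (dot p p * dot q q - dot p q ^+ 2) *: x =
  (dot x p * dot q q - dot x q * dot p q) *: p +
  (dot x q * dot p p - dot x p * dot p q) *: q + dot x (cross p q) *: cross p q.
Proof. by apply: row3P; rewrite !dot3 !mxE /=; ring. Qed.

Lemma orth_normal_span p q n c : dot p q ^+ 2 != dot p p * dot q q -> n != 0 ->
  dot n p = 0 -> dot n q = 0 -> dot n c = 0 -> exists g d, c = g *: p + d *: q.
Proof.
move=> pq n0 np nq nc; set G := dot p p * dot q q - dot p q ^+ 2.
have G0 : G != 0 by rewrite subr_eq0 eq_sym.
(* n is parallel to p x q, so c, orthogonal to n, has no p x q component. *)
have Gn : G *: n = dot n (cross p q) *: cross p q.
  by rewrite cross_decomposition np nq !mul0r subrr !scale0r !add0r.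
have n_cross : dot n (cross p q) != 0.
  apply: contra n0 => /eqP h; move: Gn; rewrite h scale0r => /eqP.
  by rewrite scaler_eq0 (negbTE G0).
have c_cross : dot c (cross p q) = 0.
  have : G * dot n c = dot n (cross p q) * dot (cross p q) c by rewrite -dotZl Gn dotZl.
  by rewrite nc mulr0 (dotC (cross p q)) => /esym/eqP; rewrite mulf_eq0 (negbTE n_cross) => /eqP.
have := cross_decomposition p q c; rewrite c_cross scale0r addr0 => Gc.
exists (G^-1 * (dot c p * dot q q - dot c q * dot p q)).
exists (G^-1 * (dot c q * dot p p - dot c p * dot p q)).
by rewrite -!scalerA -scalerDr -Gc scalerA mulVf // scale1r.
Qed.

Lemma dist2E u v : dist2 u v = dot u u - 2 * dot u v + dot v v.
Proof. by rewrite /dist2 !dot3 !mxE; ring. Qed.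

Lemma dist2xx u : dist2 u u = 0.
Proof. by rewrite dist2E; ring. Qed.

Lemma dist2_ge0 u v : 0 <= dist2 u v.
Proof. exact: dot_ge0. Qed.

Lemma dist2_eq0 u v : dist2 u v = 0 -> u = v.
Proof. by move/dot_eq0/eqP; rewrite subr_eq0 => /eqP. Qed.

Lemma dist2Z r u v : dist2 (r *: u) (r *: v) = r ^+ 2 * dist2 u v.
Proof. by rewrite !dist2E !dotZl !dotZr; ring. Qed.

Lemma dist2D_le u1 u2 v1 v2 :
  dist2 (u1 + u2) (v1 + v2) <= 2 * dist2 u1 v1 + 2 * dist2 u2 v2.
Proof.
have := dot_ge0 ((u1 - v1) - (u2 - v2)).
by rewrite /dist2 !dot3 !mxE; nra.
Qed.

End EuclideanSpace.

Section Sphere.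
Variable R : realType.
Implicit Types (p q u w x : pt R) (r : R).

Definition enorm u : R := Num.sqrt (dot u u).

Lemma enorm_sqr u : enorm u ^+ 2 = dot u u.
Proof. by rewrite sqr_sqrtr ?dot_ge0. Qed.

Lemma on_sphereN u : on_sphere u -> on_sphere (- u).
Proof. by rewrite /on_sphere => <-; rewrite !dot3 !mxE; ring. Qed.

Lemma on_sphere_neq0 u : on_sphere u -> u != 0.
Proof.
by move=> hu; apply/eqP => u0; move: hu; rewrite u0 /on_sphere dot3 !mxE !mul0r !addr0 => /eqP;
  rewrite eq_sym oner_eq0.
Qed.

Lemma on_sphere_scale r u : 0 <= r -> on_sphere u -> on_sphere (r *: u) -> r *: u = u.
Proof.
rewrite /on_sphere dotZl dotZr => r0 ->; rewrite mulr1 => r2.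
have -> : r = 1 by nra.
exact: scale1r.
Qed.

Lemma on_sphere_normalize u : 0 < enorm u -> on_sphere ((enorm u)^-1 *: u).
Proof.
move=> N0; rewrite /on_sphere dotZl dotZr -enorm_sqr.
by field; rewrite gt_eqF.
Qed.

Lemma sphere_dot_eq1 p q : on_sphere p -> on_sphere q -> dot p q = 1 -> p = q.
Proof. by move=> hp hq pq; apply: dist2_eq0; rewrite dist2E hp hq pq; ring. Qed.

Lemma sqr_enorm_sub1_le_dist2 u w : on_sphere w -> (enorm u - 1) ^+ 2 <= dist2 u w.
Proof.
move=> hw; have N0 : 0 <= enorm u := sqrtr_ge0 _.
have := dot_sqr_le u w; rewrite hw mulr1 -enorm_sqr => cs.
have uw : dot u w <= enorm u by nra.
by rewrite dist2E hw -enorm_sqr; nra.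
Qed.

Lemma dist2_normalize u w : on_sphere w -> 0 < enorm u ->
  enorm u * dist2 ((enorm u)^-1 *: u) w <= dist2 u w.
Proof.
move=> hw N0; have hu' := on_sphere_normalize N0.
rewrite (dist2E (_ *: u)) hu' hw dotZl [X in _ <= X]dist2E hw -enorm_sqr.
have -> : enorm u * (1 - 2 * ((enorm u)^-1 * dot u w) + 1) = 2 * enorm u - 2 * dot u w.
  by field; rewrite gt_eqF.
by have := sqr_ge0 (enorm u - 1); nra.
Qed.

Lemma sph_closure_self (H : pt R -> Prop) x : on_sphere x -> H x -> sph_closure H x.
Proof. by move=> hx Hx; split => // e e0; exists x; rewrite dist2xx. Qed.

End Sphere.

Section Arcs.
Variable R : realType.
Implicit Types (p q c x : pt R) (g d : R).

Lemma garcC p q x : garc p q x -> garc q p x.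
Proof. by move=> [hx [a [b [a0 b0 xE]]]]; split => //; exists b, a; rewrite xE addrC. Qed.

Lemma garc_coords p q x : garc p q x -> exists2 u, quadrant u & x = pcomb p q u.
Proof.
move=> [hx [a [b [a0 b0 xE]]]]; exists (a, b) => //; split => //=.
rewrite lt_def addr_ge0 // andbT; apply: contraNneq (on_sphere_neq0 hx) => ab0.
have [a00 b00] : a = 0 /\ b = 0 by split; lra.
by rewrite xE a00 b00 !scale0r addr0.
Qed.

Lemma arc_ok_indep p q : arc_ok p q -> dot p q ^+ 2 != dot p p * dot q q.
Proof.
move=> [hp hq pq pNq]; rewrite hp hq mulr1 sqrf_eq1; apply/norP; split; apply/eqP => h.
  exact: pq (sphere_dot_eq1 hp hq h).
by apply: pNq (sphere_dot_eq1 hp (on_sphereN hq) _); rewrite dotNr h opprK.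
Qed.

Lemma off_arc_coords_sign p q c g d : on_sphere c -> c = g *: p + d *: q ->
  ~ garc p q c -> ~ garc p q (- c) -> (0 < g /\ d < 0) \/ (g < 0 /\ 0 < d).
Proof.
move=> hc cE nc nNc.
have pos : ~ (0 <= g /\ 0 <= d) by case=> g0 d0; apply: nc; split => //; exists g, d.
have neg : ~ (g <= 0 /\ d <= 0).
  case=> g0 d0; apply: nNc; split; first exact: on_sphereN.
  by exists (- g), (- d); rewrite !oppr_ge0 cE opprD -!scaleNr.
have [g0 | g0] := ltrP 0 g.
  by left; split => //; rewrite ltNge; apply/negP => d0; apply: pos (conj (ltW g0) d0).
have [d0 | d0] := ltrP 0 d; last by case: neg.
right; split => //; rewrite lt_def g0 andbT; apply/eqP => g00.
by apply: pos; split; [rewrite g00 | exact: ltW].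
Qed.

Lemma pcomb_det2_eq0 p q u v : quadrant u -> quadrant v -> det2 u v = 0 ->
  on_sphere (pcomb p q u) -> on_sphere (pcomb p q v) -> pcomb p q u = pcomb p q v.
Proof.
move=> qu qv D hu hv; have [r r0 [e1 e2]] := det2_eq0_quadrant qu qv D.
have vE : pcomb p q v = r *: pcomb p q u by rewrite /pcomb e1 e2 scalerDr !scalerA.
by rewrite vE in hv *; rewrite on_sphere_scale.
Qed.

Lemma attractor_pole k (P A : 'I_k -> pt R) :
  attractor P A -> forall i, exists j, A j = P i \/ A j = - P i.
Proof.
move=> [Ainj AP Aanti].
have APb j : exists i, (A j == P i) || (A j == - P i).
  by have [i [->|->]] := AP j; exists i; rewrite eqxx ?orbT.
(* No two A j are equal or antipodal, so the pole index of A j is injective,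
   hence onto. *)
pose pole j := xchoose (APb j).
have poleP j : (A j == P (pole j)) || (A j == - P (pole j)) := xchooseP (APb j).
have pole_inj : injective pole.
  move=> j1 j2 e; apply: Ainj; move: (poleP j1) (poleP j2); rewrite e.
  by move=> /orP[] /eqP h1 /orP[] /eqP h2; rewrite h1 h2 //;
    case: (Aanti j1 j2); rewrite h1 h2 ?opprK.
move=> i; have [pole' _ poleK] := injF_bij pole_inj.
by exists (pole' i); move: (poleP (pole' i)); rewrite poleK => /orP[] /eqP ->; [left | right].
Qed.

End Arcs.

Section AttractorHull.
Variables (R : realType) (k : nat) (A : 'I_k -> pt R).
Implicit Types (p q c a u w x y z : pt R).
Local Notation H := (attractor_hull A).

Lemma sph_boundary_hull_hemisphere x : sph_boundary H x -> in_open_hemisphere A.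
Proof.
move=> [[hx _] nix]; apply: NNPP => hv; apply: nix.
have Hall y : on_sphere y -> H y by split => // /hv.
by split; last split; [| exact: Hall | exists 1; split => // y hy _; exact: Hall].
Qed.

Hypothesis hv : in_open_hemisphere A.

Lemma attractor_hullE x : H x <-> on_sphere x /\ cone A x.
Proof. by split => [[hx /(_ hv)] | [hx cx]]. Qed.

Lemma attractor_hull_gen j : on_sphere (A j) -> H (A j).
Proof. by move=> hj; apply/attractor_hullE; split; last exact: cone_gen. Qed.

Lemma sph_interior_hull_cone w : sph_interior H w ->
  exists2 e, 0 < e & forall u, dist2 u w < e -> cone A u.
Proof.
move=> [hw [_ [e [e0 ball]]]].
exists (Num.min (e / 2) (1 / 4)) => [|u]; first by rewrite lt_min; apply/andP; split; lra.
rewrite lt_min => /andP [ue u4].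
have N1 := sqr_enorm_sub1_le_dist2 u hw.
(* Near w, radial projection to the sphere at most doubles squared distances. *)
have Nh : 1 / 2 < enorm u by have := sqrtr_ge0 (dot u u); rewrite -/(enorm u); nra.
have N0 : 0 < enorm u by lra.
have Hu' : H ((enorm u)^-1 *: u).
  apply: ball (on_sphere_normalize N0) _.
  by have := dist2_normalize hw N0; have := dist2_ge0 ((enorm u)^-1 *: u) w; nra.
have [_ cu'] := (attractor_hullE _).1 Hu'.
have -> : u = enorm u *: ((enorm u)^-1 *: u) by rewrite scalerA mulfV ?gt_eqF // scale1r.
exact: coneZ (ltW N0) cu'.
Qed.

Lemma sph_interior_between a w x :
  sph_closure H a -> sph_interior H w -> on_sphere x -> vbetween x a w ->
  sph_interior H x.
Proof.
move=> [_ cla] iw hx [s [t [s0 t0 xE]]].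
have [e e0 ball] := sph_interior_hull_cone iw.
have t2 : 0 < t ^+ 2 by rewrite exprn_gt0.
pose del := e * t ^+ 2 / 4.
have del0 : 0 < del by rewrite divr_gt0 ?mulr_gt0.
suff Hnear y : on_sphere y -> dist2 y x < del -> H y.
  by split=> //; split; [apply: Hnear; rewrite ?dist2xx | exists del].
move=> hy yx; have s21 : 0 < s ^+ 2 + 1 by have := sqr_ge0 s; lra.
have [a' [Ha' a'a]] := cla (del / (s ^+ 2 + 1)) (divr_gt0 del0 s21).
rewrite ltr_pdivlMr // in a'a.
(* y = s a' + t u with a' in H near a; then u is near w, hence in the cone. *)
set u := t^-1 *: (y - s *: a').
have yE : y = s *: a' + t *: u by rewrite /u scalerA mulfV ?gt_eqF // scale1r addrC subrK.
have uw : t ^+ 2 * dist2 u w <= 2 * dist2 y x + 2 * (s ^+ 2 * dist2 a' a).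
  rewrite -dist2Z /u scalerA mulfV ?gt_eqF // scale1r.
  have -> : t *: w = x + (- s) *: a by rewrite xE scaleNr addrAC subrr add0r.
  by rewrite -scaleNr -(sqrrN s) -dist2Z; apply: dist2D_le.
apply/attractor_hullE; split => //; rewrite yE.
apply: coneD; first by apply: coneZ => //; case/attractor_hullE: Ha'.
apply: coneZ (ltW t0) (ball _ _).
rewrite -(ltr_pM2l t2).
by have := dist2_ge0 a' a; rewrite /del in yx a'a; nra.
Qed.

Lemma sph_boundary_on_arc_unique p q c g d x y z :
  H c -> c = g *: p + d *: q -> 0 < g -> d < 0 ->
  garc p q x -> garc p q y -> garc p q z ->
  sph_interior H z -> sph_boundary H x -> sph_boundary H y -> x = y.
Proof.
move=> Hc cE g0 d0 gx gy gz iz [clx nix] [cly niy].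
have clc := sph_closure_self Hc.1 Hc.
have {}cE : c = pcomb p q (g, d) := cE.
have [u qu xE] := garc_coords gx; have [v qv yE] := garc_coords gy.
have [w qw zE] := garc_coords gz; have [hx hy] := (gx.1, gy.1).
subst c x y z.
case: (quadrant_sweep (c := (g, d)) g0 d0 qu qv qw) => [[] B | [] B | D].
- by case: nix; exact: sph_interior_between clc iz hx (pbetween_pcomb p q B).
- by case: nix; exact: sph_interior_between cly iz hx (pbetween_pcomb p q B).
- by case: niy; exact: sph_interior_between clc iz hy (pbetween_pcomb p q B).
- by case: niy; exact: sph_interior_between clx iz hy (pbetween_pcomb p q B).
- exact: pcomb_det2_eq0 qu qv D hx hy.
Qed.

End AttractorHull.

Theorem mainTheorem14 (R : realType) (I : finType) (ends : I -> pt R * pt R)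
    (k : nat) (P : 'I_k -> pt R) (f : I -> 'I_k) (A : 'I_k -> pt R) (a : I) :
  spherical_diagram ends ->
  orientation ends P f ->
  attractor P A ->
  (exists x, garc (ends a).1 (ends a).2 x /\ sph_interior (attractor_hull A) x) ->
  forall x y : pt R,
    garc (ends a).1 (ends a).2 x -> sph_boundary (attractor_hull A) x ->
    garc (ends a).1 (ends a).2 y -> sph_boundary (attractor_hull A) y ->
    x = y.
Proof.
move=> [_ arcs _ _] [poles _ _ orient] hA [z [gz iz]] x y gx bdx gy bdy.
have hv := sph_boundary_hull_hemisphere bdx.
have [[n [n0 nP np nq]] nPa nNPa] := orient a.
have [j Aj] := attractor_pole hA (f a).
have [hc nc ncA nNcA] : [/\ on_sphere (A j), dot n (A j) = 0,
    ~ garc (ends a).1 (ends a).2 (A j) & ~ garc (ends a).1 (ends a).2 (- A j)].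
  have hP := poles (f a).
  by case: Aj => ->; rewrite ?dotNr nP ?oppr0 ?opprK; split => //; exact: on_sphereN.
have [g [d cE]] := orth_normal_span (arc_ok_indep (arcs a)) n0 np nq nc.
have Hc := attractor_hull_gen hv hc.
case: (off_arc_coords_sign hc cE ncA nNcA) => [[g0 d0] | [g0 d0]].
  exact: (sph_boundary_on_arc_unique hv Hc cE g0 d0 gx gy gz iz bdx bdy).
rewrite addrC in cE.
exact: (sph_boundary_on_arc_unique hv Hc cE d0 g0
  (garcC gx) (garcC gy) (garcC gz) iz bdx bdy).
Qed.
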